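(* Let $f$ be a $2\pi$-periodic continuous function with $f\in\mathrm{Lip}(\alpha)$, $0<\alpha\le1$, i.e. its modulus of continuity satisfies $\omega(\delta)=\mathcal{O}(\delta^{\alpha})$. Let $\{p_k\}_{k\ge0}$ be non-negative numbers with $P_n:=\sum_{k=0}^n p_k\ne0$ for all $n$, let $a_{n,k}=p_k/P_n$ for $0\le k\le n$ and $a_{n,k}=0$ otherwise, and suppose that for some $\beta\ge0$ \[ \sum_{k=0}^{m-1}(k+1)^{\beta}\left|\frac{a_{n,k}}{(k+1)^{\beta}}-\frac{a_{n,k+1}}{(k+2)^{\beta}}\right|=\mathcal{O}(a_{n,m}) \] for all $0\le m\le n$, $n=0,1,\dots$. Let $R_n(f;x):=\frac{1}{P_n}\sum_{k=0}^n p_kS_k(f;x)$. Then \[ \|R_n(f)-f\|=\begin{cases}\mathcal{O}\left(\left(\frac{p_n}{P_n}\right)^{\alpha}\right), & 0<\alpha<1,\\[4pt] \mathcal{O}\left(\frac{p_n}{P_n}\log\left(\frac{\pi P_n}{p_n}\right)\right), & \alpha=1.\end{cases} \]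
   Context: $S_k(f;x)$ is the $k$-th partial sum of the Fourier series of $f$ at $x$. $\|\cdot\|$ is the sup-norm. $\omega(\delta)=\sup_{|h|\le\delta}\sup_x|f(x+h)-f(x)|$. The notation $u=\mathcal{O}(v)$ means $u\le Cv$ for a positive constant $C$ (independent of $n$). *)

From Stdlib Require Import Reals Lra.
From Coquelicot Require Import Coquelicot.
Open Scope R_scope.

Definition fourier_a (f : R -> R) (j : nat) : R :=
  / PI * RInt (fun t => f t * cos (INR j * t)) (- PI) PI.
Definition fourier_b (f : R -> R) (j : nat) : R :=
  / PI * RInt (fun t => f t * sin (INR j * t)) (- PI) PI.

Fixpoint fourier_S (f : R -> R) (k : nat) (x : R) : R :=
  match k with
  | O => fourier_a f 0 / 2
  | S k' => fourier_S f k' x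
            + fourier_a f k * cos (INR k * x) + fourier_b f k * sin (INR k * x)
  end.

Fixpoint sum_lt (g : nat -> R) (m : nat) : R :=
  match m with
  | O => 0
  | S m' => sum_lt g m' + g m'
  end.

Definition Psum (p : nat -> R) (n : nat) : R := sum_lt p (S n).

Definition amat (p : nat -> R) (n k : nat) : R :=
  if Nat.leb k n then p k / Psum p n else 0.

Definition Rmean (p : nat -> R) (f : R -> R) (n : nat) (x : R) : R :=
  / Psum p n * sum_lt (fun k => p k * fourier_S f k x) (S n).

From Stdlib Require Import Reals Lra Lia.
From Coquelicot Require Import Coquelicot.
Open Scope R_scope.

(* Let [K_n = (1/P_n) sum_k p_k D_k] be the weighted mean of the Dirichlet kernels, so that
   [R_n(f;x) - f(x) = (1/pi) int_{-pi}^{pi} (f(x+u) - f(x)) K_n(u) du].  On (0, pi] the kernel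
   satisfies [|K_n(u)| <= 3/u] and, by Abel summation against the weights (k+1)^beta and then
   against the sums of sin((k+1/2)u), the hypothesis with m = n gives
   [|K_n(u)| <= C a_{n,n} / u^2].  Split the integral at [delta = a_{n,n} = p_n/P_n] and use
   [|f(x+u) - f(x)| <= M u^alpha]: the piece [0, delta] contributes
   O(int_0^delta u^(alpha-1)) = O(delta^alpha), and the piece [delta, pi] contributes
   O(delta int_delta^pi u^(alpha-2)), which is O(delta^alpha) for alpha < 1 and
   O(delta log(pi/delta)) for alpha = 1.  The hypothesis also forces p_n > 0. *)

Lemma sum_lt_ext (g h : nat -> R) m :
  (forall k, (k < m)%nat -> g k = h k) -> sum_lt g m = sum_lt h m.
Proof.
  induction m as [|m IH]; intros H; simpl; [reflexivity|].
  rewrite IH, H; [reflexivity|lia|intros; apply H; lia].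
Qed.

Lemma sum_lt_le (g h : nat -> R) m :
  (forall k, (k < m)%nat -> g k <= h k) -> sum_lt g m <= sum_lt h m.
Proof.
  induction m as [|m IH]; intros H; simpl; [lra|].
  apply Rplus_le_compat; [apply IH; intros; apply H|apply H]; lia.
Qed.

Lemma sum_lt_nonneg (g : nat -> R) m : (forall k, 0 <= g k) -> 0 <= sum_lt g m.
Proof.
  intros H; induction m as [|m IH]; simpl; [lra|]. specialize (H m); lra.
Qed.

Lemma Rabs_sum_lt_le (g : nat -> R) m :
  Rabs (sum_lt g m) <= sum_lt (fun k => Rabs (g k)) m.
Proof.
  induction m as [|m IH]; simpl; [rewrite Rabs_R0; lra|].
  eapply Rle_trans; [apply Rabs_triang|lra].
Qed.

Lemma sum_lt_scal_l (g : nat -> R) c m : sum_lt (fun k => c * g k) m = c * sum_lt g m.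
Proof. induction m as [|m IH]; simpl; [|rewrite IH]; ring. Qed.

Lemma sum_lt_telescope (w : nat -> R) m : sum_lt (fun k => w (S k) - w k) m = w m - w O.
Proof. induction m as [|m IH]; simpl; [|rewrite IH]; ring. Qed.

Lemma sum_lt_abel (c s : nat -> R) m :
  sum_lt (fun k => c k * s k) (S m) =
  sum_lt (fun k => (c k - c (S k)) * sum_lt s (S k)) m + c m * sum_lt s (S m).
Proof.
  induction m as [|m IH]; [simpl; ring|].
  change (sum_lt (fun k => c k * s k) (S m) + c (S m) * s (S m) =
          sum_lt (fun k => (c k - c (S k)) * sum_lt s (S k)) m
          + (c m - c (S m)) * sum_lt s (S m) + c (S m) * (sum_lt s (S m) + s (S m))).
  rewrite IH; ring.
Qed.

Lemma Rabs_sum_lt_abel_le (c s T : nat -> R) m :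
  (forall k, (k <= m)%nat -> Rabs (sum_lt s (S k)) <= T k) ->
  Rabs (sum_lt (fun k => c k * s k) (S m)) <=
  sum_lt (fun k => Rabs (c k - c (S k)) * T k) m + Rabs (c m) * T m.
Proof.
  intros HT. rewrite sum_lt_abel.
  eapply Rle_trans; [apply Rabs_triang|apply Rplus_le_compat].
  - eapply Rle_trans; [apply Rabs_sum_lt_le|apply sum_lt_le]. intros k Hk.
    rewrite Rabs_mult. apply Rmult_le_compat_l; [apply Rabs_pos|apply HT; lia].
  - rewrite Rabs_mult. apply Rmult_le_compat_l; [apply Rabs_pos|apply HT; lia].
Qed.

Lemma le_sum_lt_variation (b : nat -> R) m k : (k <= m)%nat ->
  b k <= b m + sum_lt (fun j => Rabs (b j - b (S j))) m.
Proof.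
  induction m as [|m IH]; intros Hk.
  - replace k with O by lia. simpl. lra.
  - simpl. destruct (Nat.eq_dec k (S m)) as [->|Hne].
    + pose proof (sum_lt_nonneg (fun j => Rabs (b j - b (S j))) m (fun j => Rabs_pos _)).
      pose proof (Rabs_pos (b m - b (S m))). lra.
    + specialize (IH ltac:(lia)). pose proof (Rle_abs (b m - b (S m))). lra.
Qed.


Lemma continuous_Rplus (g h : R -> R) x :
  continuous g x -> continuous h x -> continuous (fun y => g y + h y) x.
Proof. exact (continuous_plus g h x). Qed.

Lemma continuous_Rminus (g h : R -> R) x :
  continuous g x -> continuous h x -> continuous (fun y => g y - h y) x.
Proof. exact (continuous_minus g h x). Qed.

Lemma continuous_Rmult (g h : R -> R) x :
  continuous g x -> continuous h x -> continuous (fun y => g y * h y) x.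
Proof. exact (continuous_mult g h x). Qed.

Lemma continuous_Ropp (g : R -> R) x : continuous g x -> continuous (fun y => - g y) x.
Proof. exact (continuous_opp g x). Qed.

Lemma continuous_sum_lt (F : nat -> R -> R) m x :
  (forall k, continuous (F k) x) -> continuous (fun u => sum_lt (fun k => F k u) m) x.
Proof.
  intros H; induction m as [|m IH]; simpl;
    [apply continuous_const|apply continuous_Rplus; [exact IH|apply H]].
Qed.

Create HintDb continuous_R.
#[export] Hint Resolve continuous_Rplus continuous_Rminus continuous_Rmult continuous_Ropp
  continuous_cos_comp continuous_sin_comp continuous_Rabs_comp continuous_sum_lt : continuous_R.
#[export] Hint Extern 1 (continuous (fun _ => _) _) => apply continuous_const : continuous_R.
#[export] Hint Extern 1 (continuous (fun y => y) _) => apply continuous_id : continuous_R.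
#[export] Hint Extern 5 (continuous (fun _ => ?g _) _) =>
  apply (continuous_comp _ g) : continuous_R.

Ltac solve_continuous := auto 20 with continuous_R.

Lemma ex_RInt_continuous_R (h : R -> R) a b : (forall x, continuous h x) -> ex_RInt h a b.
Proof. intros H. apply (@ex_RInt_continuous R_CompleteNormedModule). intros; apply H. Qed.
#[export] Hint Extern 1 (ex_RInt _ _ _) => apply ex_RInt_continuous_R : continuous_R.

Lemma RInt_ext_R (g h : R -> R) a b : (forall x, Rmin a b < x < Rmax a b -> g x = h x) ->
  RInt g a b = RInt h a b.
Proof. exact (RInt_ext g h a b). Qed.

Lemma RInt_Rplus (g h : R -> R) a b : ex_RInt g a b -> ex_RInt h a b ->
  RInt (fun t => g t + h t) a b = RInt g a b + RInt h a b.
Proof. exact (RInt_plus g h a b). Qed.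

Lemma RInt_Rminus (g h : R -> R) a b : ex_RInt g a b -> ex_RInt h a b ->
  RInt (fun t => g t - h t) a b = RInt g a b - RInt h a b.
Proof. exact (RInt_minus g h a b). Qed.

Lemma RInt_Rmult_l (g : R -> R) c a b : ex_RInt g a b ->
  RInt (fun t => c * g t) a b = c * RInt g a b.
Proof. exact (RInt_scal g a b c). Qed.

Lemma RInt_Chasles_R (g : R -> R) a b c : (forall x, continuous g x) ->
  RInt g a b + RInt g b c = RInt g a c.
Proof. intros Hg. apply (RInt_Chasles g); solve_continuous. Qed.

Lemma RInt_comp_shift (g : R -> R) v a b : (forall x, continuous g x) ->
  RInt (fun y => g (y + v)) a b = RInt g (a + v) (b + v).
Proof.
  intros Hg. rewrite <- (RInt_comp g (fun y => y + v) (fun _ => 1)).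
  - apply RInt_ext_R. intros y _. unfold scal; simpl; unfold mult; simpl. ring.
  - intros; apply Hg.
  - intros; split; [auto_derive; auto|apply continuous_const].
Qed.

Lemma RInt_comp_opp (g : R -> R) a b : (forall x, continuous g x) ->
  RInt (fun y => g (- y)) a b = RInt g (- b) (- a).
Proof.
  intros Hg.
  assert (E : RInt (fun y => scal (-1) (g (- y))) a b = RInt g (- a) (- b)).
  { apply (RInt_comp g (fun y => - y) (fun _ => -1)); intros; [apply Hg|].
    split; [auto_derive; auto|apply continuous_const]. }
  rewrite (RInt_ext_R _ (fun y => opp (g (- y)))) in E
    by (intros; unfold scal, opp; simpl; unfold mult; simpl; ring).
  rewrite (RInt_opp (fun y => g (- y))) in E by solve_continuous.
  rewrite <- (opp_RInt_swap g), <- E by solve_continuous.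
  unfold opp; simpl. symmetry; apply Ropp_involutive.
Qed.

Lemma RInt_periodic_shift (g : R -> R) x :
  (forall t, continuous g t) -> (forall t, g (t + 2 * PI) = g t) ->
  RInt (fun u => g (x + u)) (- PI) PI = RInt g (- PI) PI.
Proof.
  intros Hg Hper.
  rewrite (RInt_ext_R _ (fun u => g (u + x))) by (intros; rewrite Rplus_comm; reflexivity).
  rewrite RInt_comp_shift by exact Hg.
  set (a := - PI + x). replace (PI + x) with (a + 2 * PI) by (unfold a; ring).
  assert (Hwrap : RInt g PI (a + 2 * PI) = RInt g (- PI) a).
  { replace PI with (- PI + 2 * PI) at 1 by ring.
    rewrite <- RInt_comp_shift by exact Hg. apply RInt_ext_R. intros; apply Hper. }
  rewrite <- (RInt_Chasles_R g a PI) by exact Hg.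
  rewrite Hwrap, Rplus_comm. apply RInt_Chasles_R, Hg.
Qed.

Lemma RInt_sum_lt (F : nat -> R -> R) m a b : (forall k x, continuous (F k) x) ->
  RInt (fun u => sum_lt (fun k => F k u) m) a b = sum_lt (fun k => RInt (F k) a b) m.
Proof.
  intros H. induction m as [|m IH]; simpl.
  - rewrite RInt_const. unfold scal; simpl; unfold mult; simpl. ring.
  - rewrite RInt_Rplus, IH; [reflexivity| |apply ex_RInt_continuous_R, H].
    apply ex_RInt_continuous_R. intros; apply continuous_sum_lt. intros; apply H.
Qed.

Lemma Rpower_minus_nat u e k : 0 < u -> Rpower u (e - INR k) = Rpower u e / u ^ k.
Proof.
  intros Hu. unfold Rminus. rewrite Rpower_plus, Rpower_Ropp, Rpower_pow by exact Hu.
  reflexivity.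
Qed.

Lemma RInt_le_is_RInt (g G : R -> R) a b I : a <= b -> ex_RInt g a b ->
  (forall u, a < u < b -> g u <= G u) -> is_RInt G a b I -> RInt g a b <= I.
Proof.
  intros Hab Hg HgG HI. rewrite <- (is_RInt_unique G a b I HI).
  apply RInt_le; [exact Hab|exact Hg|exists I; exact HI|exact HgG].
Qed.

Lemma is_RInt_Rpower a b e : 0 < a -> 0 < b -> e <> 0 ->
  is_RInt (fun u => Rpower u (e - 1)) a b ((Rpower b e - Rpower a e) / e).
Proof.
  intros Ha Hb He.
  assert (Hpos : forall x, Rmin a b <= x <= Rmax a b -> 0 < x).
  { intros x Hx. pose proof (Rmin_glb_lt a b 0 Ha Hb). lra. }
  replace ((Rpower b e - Rpower a e) / e) with (minus (/ e * Rpower b e) (/ e * Rpower a e))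
    by (unfold minus, plus, opp; simpl; field; exact He).
  apply (is_RInt_derive (fun u => / e * Rpower u e)).
  - intros x Hx.
    replace (Rpower x (e - 1)) with (/ e * (e * Rpower x (e - 1))) by (field; exact He).
    apply is_derive_scal, is_derive_Reals, derivable_pt_lim_power, Hpos, Hx.
  - intros x Hx. apply (@ex_derive_continuous R_AbsRing R_NormedModule).
    eexists. apply is_derive_Reals, derivable_pt_lim_power, Hpos, Hx.
Qed.

Lemma is_RInt_inv a b : 0 < a -> 0 < b -> is_RInt Rinv a b (ln b - ln a).
Proof.
  intros Ha Hb.
  assert (Hpos : forall x, Rmin a b <= x <= Rmax a b -> 0 < x).
  { intros x Hx. pose proof (Rmin_glb_lt a b 0 Ha Hb). lra. }
  apply (is_RInt_derive ln Rinv).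
  - intros x Hx. apply is_derive_Reals, derivable_pt_lim_ln, Hpos, Hx.
  - intros x Hx. apply (@ex_derive_continuous R_AbsRing R_NormedModule).
    auto_derive. apply Rgt_not_eq, Hpos, Hx.
Qed.

(* [u ^ (e - 1)] is not Riemann integrable at [0] when [e < 1]: use the bound only on
   [[d, de]] and bound [g] on the short piece [[0, d]] by its maximum. *)
Lemma RInt_le_Rpower_singular (g : R -> R) c e de :
  (forall x, continuous g x) -> 0 <= c -> 0 < e -> 0 < de ->
  (forall u, 0 < u < de -> g u <= c * Rpower u (e - 1)) ->
  RInt g 0 de <= c / e * Rpower de e.
Proof.
  intros Hg Hc He Hde Hbound. apply Rle_plus_epsilon. intros eps Heps.
  destruct (continuity_ab_maj g 0 de) as [xmax [Hmax _]]; [lra| |].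
  { intros x _. apply continuity_pt_filterlim, Hg. }
  set (B := Rabs (g xmax) + 1).
  assert (HB : 0 < B) by (unfold B; pose proof (Rabs_pos (g xmax)); lra).
  set (d := Rmin (de / 2) (eps / B)).
  assert (Hd : 0 < d) by (apply Rmin_glb_lt; [lra|apply Rdiv_lt_0_compat; lra]).
  assert (Hd_de : d <= de / 2) by apply Rmin_l.
  assert (HdB : d * B <= eps).
  { replace eps with (eps / B * B) by (field; lra).
    apply Rmult_le_compat_r; [lra|apply Rmin_r]. }
  rewrite <- (RInt_Chasles_R g 0 d de) by exact Hg.
  assert (Hnear : RInt g 0 d <= d * B).
  { apply (RInt_le_is_RInt g (fun _ => B)); [lra|solve_continuous| |].
    - intros u Hu. pose proof (Hmax u ltac:(lra)). pose proof (Rle_abs (g xmax)).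
      unfold B. lra.
    - replace (d * B) with (scal (d - 0) B) by (unfold scal; simpl; unfold mult; simpl; ring).
      exact (@is_RInt_const R_NormedModule 0 d B). }
  assert (Hfar : RInt g d de <= c * ((Rpower de e - Rpower d e) / e)).
  { apply (RInt_le_is_RInt g (fun u => c * Rpower u (e - 1))); [lra|solve_continuous| |].
    - intros u Hu. apply Hbound. lra.
    - apply (is_RInt_scal (fun u => Rpower u (e - 1))), is_RInt_Rpower; lra. }
  assert (0 <= c * (Rpower d e / e))
    by (apply Rmult_le_pos; [exact Hc|apply Rlt_le, Rdiv_lt_0_compat; [apply exp_pos|lra]]).
  unfold Rdiv in *. lra.
Qed.

(** * The Dirichlet kernel *)

Lemma sin_half_ge u : 0 <= u <= PI -> u / 6 <= sin (u / 2).
Proof.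
  intros Hu. pose proof PI_4. pose proof PI2_3_2.
  set (y := u / 2). replace (u / 6) with (y / 3) by (unfold y; field).
  assert (Hy : 0 <= y <= 2) by (unfold y; lra).
  destruct (SIN y) as [Hlb _]; [lra|lra|].
  replace (sin_lb y) with (y - y ^ 3 / 6 + y ^ 5 / 120 - y ^ 7 / 5040) in Hlb
    by (unfold sin_lb, sin_approx, sin_term; simpl; field).
  assert (y * (y * y) <= y * 4) by (apply Rmult_le_compat_l; nra).
  assert (0 <= y * (y * y) * (y * y) * (42 - y * y))
    by (apply Rmult_le_pos; [repeat apply Rmult_le_pos|]; nra).
  lra.
Qed.

Fixpoint dirichlet (k : nat) (u : R) : R :=
  match k with
  | O => / 2
  | S k' => dirichlet k' u + cos (INR k * u)
  end.

Definition sin_half_odd (u : R) (k : nat) : R := sin ((INR k + / 2) * u).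

Lemma dirichlet_sin_half k u : 2 * sin (u / 2) * dirichlet k u = sin_half_odd u k.
Proof.
  unfold sin_half_odd. induction k as [|k IH].
  - simpl. replace ((0 + / 2) * u) with (u / 2) by field. field.
  - change (dirichlet (S k) u) with (dirichlet k u + cos (INR (S k) * u)).
    rewrite Rmult_plus_distr_l, IH.
    replace ((INR (S k) + / 2) * u) with (INR (S k) * u + u / 2) by (rewrite S_INR; field).
    replace ((INR k + / 2) * u) with (INR (S k) * u - u / 2) by (rewrite S_INR; field).
    rewrite sin_plus, sin_minus. ring.
Qed.

Lemma sum_sin_half_odd m u : 2 * sin (u / 2) * sum_lt (sin_half_odd u) m = 1 - cos (INR m * u).
Proof.
  unfold sin_half_odd. induction m as [|m IH].
  - simpl. rewrite Rmult_0_l, cos_0. ring.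
  - change (sum_lt (fun k => sin ((INR k + / 2) * u)) (S m)) with
      (sum_lt (fun k => sin ((INR k + / 2) * u)) m + sin ((INR m + / 2) * u)).
    rewrite Rmult_plus_distr_l, IH.
    replace (INR m * u) with ((INR m + / 2) * u - u / 2) by field.
    replace (INR (S m) * u) with ((INR m + / 2) * u + u / 2) by (rewrite S_INR; field).
    rewrite cos_plus, cos_minus. ring.
Qed.

Lemma Rabs_sum_sin_half_odd_le m u :
  0 < sin (u / 2) -> Rabs (sum_lt (sin_half_odd u) m) <= / sin (u / 2).
Proof.
  intros Hs. pose proof (COS_bound (INR m * u)).
  replace (sum_lt (sin_half_odd u) m) with ((1 - cos (INR m * u)) * / (2 * sin (u / 2)))
    by (rewrite <- sum_sin_half_odd; field; lra).
  rewrite Rabs_mult, Rabs_inv, (Rabs_right (2 * sin (u / 2))) by lra.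
  replace (/ sin (u / 2)) with (2 * / (2 * sin (u / 2))) by (field; lra).
  apply Rmult_le_compat_r; [left; apply Rinv_0_lt_compat; lra|].
  apply Rabs_le; lra.
Qed.

Section AbelSineSums.

Variable w : nat -> R.
Hypothesis w_pos : forall k, 0 < w k.
Hypothesis w_nondecreasing : forall k, w k <= w (S k).

Lemma Rabs_weighted_sum_sin_half_odd_le u m : 0 < sin (u / 2) ->
  Rabs (sum_lt (fun k => w k * sin_half_odd u k) (S m)) <= 2 * w m / sin (u / 2).
Proof.
  intros Hs. eapply Rle_trans.
  { apply (Rabs_sum_lt_abel_le w (sin_half_odd u) (fun _ => / sin (u / 2))).
    intros; apply Rabs_sum_sin_half_odd_le, Hs. }
  rewrite (sum_lt_ext _ (fun k => / sin (u / 2) * (w (S k) - w k))).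
  2:{ intros k _. rewrite Rabs_left1 by (pose proof (w_nondecreasing k); lra). ring. }
  rewrite sum_lt_scal_l, sum_lt_telescope, Rabs_right by (left; apply w_pos).
  pose proof (w_pos O). pose proof (Rinv_0_lt_compat _ Hs). unfold Rdiv. nra.
Qed.

(* Abel summation twice: first against the weights [w], then against the sine sums. *)
Lemma Rabs_sum_sin_half_odd_abel_le (c : nat -> R) u n : 0 < sin (u / 2) ->
  Rabs (sum_lt (fun k => c k * sin_half_odd u k) (S n)) <=
  2 / sin (u / 2) *
  (sum_lt (fun k => w k * Rabs (c k / w k - c (S k) / w (S k))) n + Rabs (c n)).
Proof.
  intros Hs.
  rewrite (sum_lt_ext _ (fun k => c k / w k * (w k * sin_half_odd u k)))
    by (intros k _; field; apply Rgt_not_eq, w_pos).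
  eapply Rle_trans.
  { apply (Rabs_sum_lt_abel_le (fun k => c k / w k) _ (fun k => 2 * w k / sin (u / 2))).
    intros; apply Rabs_weighted_sum_sin_half_odd_le, Hs. }
  rewrite (sum_lt_ext _ (fun k => 2 / sin (u / 2) *
                                  (w k * Rabs (c k / w k - c (S k) / w (S k)))))
    by (intros k _; field; lra).
  rewrite sum_lt_scal_l. pose proof (w_pos n).
  replace (Rabs (c n / w n)) with (Rabs (c n) / w n)
    by (unfold Rdiv; rewrite Rabs_mult, Rabs_inv, (Rabs_right (w n)); lra).
  right. field. split; lra.
Qed.

End AbelSineSums.

Lemma Rabs_dirichlet_le k u : 0 < u <= PI -> Rabs (dirichlet k u) <= 3 / u.
Proof.
  intros Hu. pose proof (sin_half_ge u ltac:(lra)) as Hs.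
  replace (dirichlet k u) with (sin_half_odd u k * / (2 * sin (u / 2)))
    by (rewrite <- dirichlet_sin_half; field; lra).
  rewrite Rabs_mult, Rabs_inv, (Rabs_right (2 * sin (u / 2))) by lra.
  assert (Rabs (sin_half_odd u k) <= 1) by (apply Rabs_le, SIN_bound).
  apply Rle_trans with (/ (2 * sin (u / 2))).
  - rewrite <- (Rmult_1_l (/ (2 * _))) at 2.
    apply Rmult_le_compat_r; [left; apply Rinv_0_lt_compat|]; lra.
  - replace (3 / u) with (/ (2 * (u / 6))) by (field; lra).
    apply Rinv_le_contravar; lra.
Qed.

Lemma continuous_dirichlet k x : continuous (dirichlet k) x.
Proof.
  induction k as [|k IH]; simpl; [apply continuous_const|solve_continuous].
Qed.
#[export] Hint Resolve continuous_dirichlet : continuous_R.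

Lemma dirichlet_opp k u : dirichlet k (- u) = dirichlet k u.
Proof.
  induction k as [|k IH]; simpl; [reflexivity|].
  rewrite IH, <- cos_neg. f_equal. f_equal. ring.
Qed.

Lemma RInt_cos_mult_nat j : (1 <= j)%nat -> RInt (fun u => cos (INR j * u)) (- PI) PI = 0.
Proof.
  intros Hj. assert (HJ : 0 < INR j) by (apply lt_0_INR; lia).
  assert (Hsin : sin (INR j * PI) = 0).
  { clear. induction j as [|j IH]; [simpl; rewrite Rmult_0_l; apply sin_0|].
    rewrite S_INR, Rmult_plus_distr_r, Rmult_1_l, neg_sin, IH. ring. }
  apply is_RInt_unique.
  replace 0 with (minus (sin (INR j * PI) / INR j) (sin (INR j * - PI) / INR j)).
  2:{ unfold minus, plus, opp; simpl.
      rewrite Ropp_mult_distr_r_reverse, sin_neg, Hsin. field. lra. }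
  apply (is_RInt_derive (fun u => sin (INR j * u) / INR j)).
  - intros x _. auto_derive; [exact I|field; lra].
  - intros x _. solve_continuous.
Qed.

Lemma RInt_dirichlet k : RInt (dirichlet k) (- PI) PI = PI.
Proof.
  induction k as [|k IH].
  - simpl. rewrite RInt_const. unfold scal; simpl; unfold mult; simpl. field.
  - change (dirichlet (S k)) with (fun u => dirichlet k u + cos (INR (S k) * u)).
    rewrite RInt_Rplus by solve_continuous.
    rewrite IH, RInt_cos_mult_nat by lia. apply Rplus_0_r.
Qed.

(** * Partial sums and their means as convolutions *)

Section FourierConvolution.

Variable f : R -> R.
Hypothesis f_cont : forall t, continuous f t.
Hypothesis f_periodic : forall t, f (t + 2 * PI) = f t.

Lemma fourier_term_conv j x :
  fourier_a f j * cos (INR j * x) + fourier_b f j * sin (INR j * x) =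
  / PI * RInt (fun u => f (x + u) * cos (INR j * u)) (- PI) PI.
Proof.
  assert (Hshift : RInt (fun u => f (x + u) * cos (INR j * u)) (- PI) PI =
                   RInt (fun t => f t * cos (INR j * (t - x))) (- PI) PI).
  { rewrite <- (RInt_periodic_shift (fun t => f t * cos (INR j * (t - x))) x).
    - apply RInt_ext_R. intros u _. now replace (x + u - x) with u by ring.
    - solve_continuous.
    - intros t. rewrite f_periodic. f_equal.
      replace (INR j * (t + 2 * PI - x)) with (INR j * (t - x) + 2 * INR j * PI) by ring.
      apply cos_period. }
  rewrite Hshift, (RInt_ext_R _ (fun t => cos (INR j * x) * (f t * cos (INR j * t))
                                       + sin (INR j * x) * (f t * sin (INR j * t)))).
  2:{ intros t _. rewrite Rmult_minus_distr_l, cos_minus. ring. }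
  rewrite RInt_Rplus, !RInt_Rmult_l by solve_continuous.
  unfold fourier_a, fourier_b. ring.
Qed.

Lemma fourier_S_conv k x :
  fourier_S f k x = / PI * RInt (fun u => f (x + u) * dirichlet k u) (- PI) PI.
Proof.
  induction k as [|k IH].
  - pose proof (fourier_term_conv 0 x) as H0. simpl in H0 |- *.
    rewrite Rmult_0_l, cos_0, sin_0 in H0.
    rewrite (RInt_ext_R _ (fun u => / 2 * (f (x + u) * cos (0 * u))))
      by (intros; rewrite Rmult_0_l, cos_0; ring).
    rewrite RInt_Rmult_l by solve_continuous.
    rewrite Rmult_comm, Rmult_assoc, (Rmult_comm _ (/ PI)), <- H0. unfold Rdiv. ring.
  - change (fourier_S f (S k) x) with
      (fourier_S f k x + fourier_a f (S k) * cos (INR (S k) * x)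
                       + fourier_b f (S k) * sin (INR (S k) * x)).
    rewrite Rplus_assoc, fourier_term_conv, IH, <- Rmult_plus_distr_l, <- RInt_Rplus
      by solve_continuous.
    f_equal. apply RInt_ext_R. intros; simpl. ring.
Qed.

End FourierConvolution.

Definition mean_kernel (p : nat -> R) (n : nat) (u : R) : R :=
  / Psum p n * sum_lt (fun k => p k * dirichlet k u) (S n).

Lemma continuous_mean_kernel p n x : continuous (mean_kernel p n) x.
Proof.
  unfold mean_kernel. apply continuous_Rmult; [apply continuous_const|].
  apply (continuous_sum_lt (fun k u => p k * dirichlet k u)). intros; solve_continuous.
Qed.
#[export] Hint Resolve continuous_mean_kernel : continuous_R.

Lemma mean_kernel_opp p n u : mean_kernel p n (- u) = mean_kernel p n u.
Proof.
  unfold mean_kernel. f_equal. apply sum_lt_ext. intros; rewrite dirichlet_opp; reflexivity.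
Qed.

Lemma RInt_mean_kernel p n : Psum p n <> 0 -> RInt (mean_kernel p n) (- PI) PI = PI :> R.
Proof.
  intros HP. unfold mean_kernel.
  rewrite RInt_Rmult_l, (RInt_sum_lt (fun k u => p k * dirichlet k u)) by solve_continuous.
  rewrite (sum_lt_ext _ (fun k => PI * p k)), sum_lt_scal_l.
  - fold (Psum p n). field. exact HP.
  - intros k _. rewrite RInt_Rmult_l, RInt_dirichlet by solve_continuous. ring.
Qed.

Section MeanConvolution.

Variable f : R -> R.
Hypothesis f_cont : forall t, continuous f t.
Hypothesis f_periodic : forall t, f (t + 2 * PI) = f t.

Lemma Rmean_conv p n x :
  Rmean p f n x = / PI * RInt (fun u => f (x + u) * mean_kernel p n u) (- PI) PI.
Proof.
  unfold Rmean, mean_kernel.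
  rewrite (sum_lt_ext _ (fun k => / PI * RInt (fun u => p k * (f (x + u) * dirichlet k u))
                                                (- PI) PI)).
  2:{ intros k _. rewrite fourier_S_conv, RInt_Rmult_l by solve_continuous. ring. }
  rewrite sum_lt_scal_l, <- (RInt_sum_lt (fun k u => p k * (f (x + u) * dirichlet k u)))
    by solve_continuous.
  rewrite (RInt_ext_R (fun u => f (x + u) * _)
             (fun u => / Psum p n * sum_lt (fun k => p k * (f (x + u) * dirichlet k u)) (S n))).
  2:{ intros u _.
      rewrite (sum_lt_ext (fun k => p k * (f (x + u) * dirichlet k u))
                          (fun k => f (x + u) * (p k * dirichlet k u)))
        by (intros; ring).
      rewrite sum_lt_scal_l. ring. }
  rewrite RInt_Rmult_l by solve_continuous. ring.
Qed.

Lemma Rmean_sub_conv p n x : Psum p n <> 0 ->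
  Rmean p f n x - f x =
  / PI * RInt (fun u => (f (x + u) - f x) * mean_kernel p n u) (- PI) PI.
Proof.
  intros HP.
  rewrite Rmean_conv, (RInt_ext_R (fun u => (f (x + u) - f x) * mean_kernel p n u)
                                  (fun u => f (x + u) * mean_kernel p n u
                                               - f x * mean_kernel p n u))
    by (intros; ring).
  rewrite RInt_Rminus, RInt_Rmult_l, RInt_mean_kernel by solve_continuous.
  field. apply PI_neq0.
Qed.

Lemma Rabs_Rmean_sub_le p n x : Psum p n <> 0 ->
  Rabs (Rmean p f n x - f x) <=
  / PI * (RInt (fun u => Rabs ((f (x + - u) - f x) * mean_kernel p n u)) 0 PI
          + RInt (fun u => Rabs ((f (x + u) - f x) * mean_kernel p n u)) 0 PI).
Proof.
  intros HP. pose proof PI_RGT_0.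
  rewrite Rmean_sub_conv, Rabs_mult, Rabs_inv, (Rabs_right PI) by (auto; lra).
  set (h := fun u => (f (x + u) - f x) * mean_kernel p n u).
  apply Rmult_le_compat_l; [left; apply Rinv_0_lt_compat; lra|].
  eapply Rle_trans; [apply abs_RInt_le; [lra|unfold h; solve_continuous]|].
  rewrite <- (RInt_Chasles_R (fun u => Rabs (h u)) (- PI) 0 PI) by (unfold h; solve_continuous).
  replace (RInt (fun u => Rabs (h u)) (- PI) 0) with (RInt (fun u => Rabs (h (- u))) 0 PI)
    by (rewrite (RInt_comp_opp (fun u => Rabs (h u))), Ropp_0;
        [reflexivity|unfold h; solve_continuous]).
  right. f_equal. apply RInt_ext_R. intros u _. unfold h. rewrite mean_kernel_opp. reflexivity.
Qed.

End MeanConvolution.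

(** * Bounds for the mean kernel *)

Lemma Psum_pos p n : (forall k, 0 <= p k) -> Psum p n <> 0 -> 0 < Psum p n.
Proof. intros Hp HP. pose proof (sum_lt_nonneg p (S n) Hp). unfold Psum in *. lra. Qed.

Lemma amat_diag p n : amat p n n = p n / Psum p n.
Proof. unfold amat. now rewrite Nat.leb_refl. Qed.

Lemma mean_kernel_sin_half p n u :
  2 * sin (u / 2) * mean_kernel p n u = sum_lt (fun k => amat p n k * sin_half_odd u k) (S n).
Proof.
  unfold mean_kernel. rewrite <- !sum_lt_scal_l. apply sum_lt_ext. intros k Hk.
  unfold amat. rewrite (proj2 (Nat.leb_le k n)) by lia.
  rewrite <- dirichlet_sin_half. unfold Rdiv. ring.
Qed.

Lemma Rabs_mean_kernel_le_inv p n u : (forall k, 0 <= p k) -> Psum p n <> 0 ->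
  0 < u <= PI -> Rabs (mean_kernel p n u) <= 3 / u.
Proof.
  intros Hp HP Hu. pose proof (Psum_pos p n Hp HP).
  unfold mean_kernel. rewrite Rabs_mult, Rabs_inv, (Rabs_right (Psum p n)) by lra.
  apply Rle_trans with (/ Psum p n * sum_lt (fun k => 3 / u * p k) (S n)).
  - apply Rmult_le_compat_l; [left; apply Rinv_0_lt_compat; lra|].
    eapply Rle_trans; [apply Rabs_sum_lt_le|apply sum_lt_le]. intros k _.
    rewrite Rabs_mult, (Rabs_right (p k)), Rmult_comm by (apply Rle_ge, Hp).
    apply Rmult_le_compat_r; [apply Hp|apply Rabs_dirichlet_le, Hu].
  - rewrite sum_lt_scal_l. fold (Psum p n). right. field. lra.
Qed.

Section VariationCondition.

Variables (p w : nat -> R) (n : nat) (Kc : R).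
Hypothesis p_nonneg : forall k, 0 <= p k.
Hypothesis Psum_neq0 : Psum p n <> 0.
Hypothesis w_ge1 : forall k, 1 <= w k.
Hypothesis w_nondecreasing : forall k, w k <= w (S k).
Hypothesis amat_variation_le :
  sum_lt (fun k => w k * Rabs (amat p n k / w k - amat p n (S k) / w (S k))) n
  <= Kc * amat p n n.

Let w_pos k : 0 < w k.
Proof. pose proof (w_ge1 k). lra. Qed.

Lemma amat_variation_nonneg :
  0 <= sum_lt (fun k => w k * Rabs (amat p n k / w k - amat p n (S k) / w (S k))) n.
Proof.
  apply sum_lt_nonneg. intros k. apply Rmult_le_pos; [left; apply w_pos|apply Rabs_pos].
Qed.

(* If [p n = 0], the variation condition forces [amat p n k <= 0] for all [k <= n],
   hence [Psum p n <= 0]. *)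
Lemma p_last_pos : 0 < p n.
Proof.
  pose proof (Psum_pos p n p_nonneg Psum_neq0) as HPpos.
  destruct (p_nonneg n) as [|Hpn]; [assumption|exfalso].
  set (b := fun k => amat p n k / w k).
  assert (Hbn : b n = 0) by (unfold b; rewrite amat_diag, <- Hpn; unfold Rdiv; ring).
  assert (Hvar : sum_lt (fun j => Rabs (b j - b (S j))) n <= 0).
  { eapply Rle_trans; [|eapply Rle_trans;
      [exact amat_variation_le|rewrite amat_diag, <- Hpn; unfold Rdiv; lra]].
    apply sum_lt_le. intros k _.
    rewrite <- (Rmult_1_l (Rabs (b k - b (S k)))).
    apply Rmult_le_compat_r; [apply Rabs_pos|apply w_ge1]. }
  assert (Hp0 : forall k, (k < S n)%nat -> p k <= 0).
  { intros k Hk. pose proof (le_sum_lt_variation b n k ltac:(lia)).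
    assert (Hbk : b k <= 0) by lra.
    unfold b, amat in Hbk. rewrite (proj2 (Nat.leb_le k n)) in Hbk by lia.
    pose proof (w_pos k). assert (0 < Psum p n * w k) by (apply Rmult_lt_0_compat; lra).
    replace (p k) with (p k / Psum p n / w k * (Psum p n * w k)) by (field; lra).
    nra. }
  assert (Psum p n <= 0).
  { unfold Psum. apply Rle_trans with (sum_lt (fun _ => 0) (S n)).
    - apply sum_lt_le. exact Hp0.
    - right. clear. induction (S n) as [|m IH]; simpl; [|rewrite IH]; ring. }
  lra.
Qed.

Lemma Rabs_mean_kernel_le_inv_sq u : 0 < u <= PI ->
  Rabs (mean_kernel p n u) <= 36 * (Kc + 1) * amat p n n / (u * u).
Proof.
  intros Hu. pose proof (sin_half_ge u ltac:(lra)) as Hs.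
  set (s := sin (u / 2)) in *. set (a := amat p n n).
  assert (Ha : 0 <= a) by (unfold a; rewrite amat_diag; pose proof p_last_pos;
                           pose proof (Psum_pos p n p_nonneg Psum_neq0);
                           apply Rlt_le, Rdiv_lt_0_compat; lra).
  pose proof amat_variation_nonneg.
  assert (Habel := Rabs_sum_sin_half_odd_abel_le w w_pos w_nondecreasing (amat p n) u n
                     ltac:(fold s; lra)).
  rewrite <- mean_kernel_sin_half in Habel. fold s a in Habel.
  rewrite Rabs_mult, (Rabs_right (2 * s)), (Rabs_right a) in Habel by lra.
  assert (Hks : 2 * s * Rabs (mean_kernel p n u) <= 2 / s * ((Kc + 1) * a)).
  { eapply Rle_trans; [exact Habel|]. apply Rmult_le_compat_l.
    - apply Rlt_le, Rdiv_lt_0_compat; lra.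
    - fold a in amat_variation_le. lra. }
  assert (Hk : Rabs (mean_kernel p n u) <= (Kc + 1) * a * / (s * s)).
  { apply Rmult_le_reg_l with (2 * s); [lra|].
    replace (2 * s * ((Kc + 1) * a * / (s * s))) with (2 / s * ((Kc + 1) * a))
      by (field; lra).
    exact Hks. }
  eapply Rle_trans; [exact Hk|].
  replace (36 * (Kc + 1) * a / (u * u)) with ((Kc + 1) * a * / (u * u / 36)) by (field; lra).
  apply Rmult_le_compat_l; [fold a in amat_variation_le; nra|].
  apply Rinv_le_contravar; nra.
Qed.

End VariationCondition.

(** * Order of approximation *)

Section KernelIntegral.

Variables (g Kf : R -> R) (M A B al de : R).
Hypothesis g_cont : forall x, continuous g x.
Hypothesis Kf_cont : forall x, continuous Kf x.
Hypothesis M_ge0 : 0 <= M.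
Hypothesis A_ge0 : 0 <= A.
Hypothesis B_ge0 : 0 <= B.
Hypothesis al_pos : 0 < al.
Hypothesis de_pos : 0 < de.
Hypothesis de_le_PI : de <= PI.
Hypothesis g_le : forall u, 0 < u -> Rabs (g u) <= M * Rpower u al.
Hypothesis Kf_le_inv : forall u, 0 < u <= PI -> Rabs (Kf u) <= A / u.
Hypothesis Kf_le_inv_sq : forall u, 0 < u <= PI -> Rabs (Kf u) <= B * de / (u * u).

Let h u := Rabs (g u * Kf u).

Let h_cont x : continuous h x.
Proof. unfold h. solve_continuous. Qed.

Let h_le_Rpower k (C : R) : 0 <= C ->
  (forall u, 0 < u <= PI -> Rabs (Kf u) <= C / u ^ k) ->
  forall u, 0 < u <= PI -> h u <= M * C * Rpower u (al - INR k).
Proof.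
  intros HC HK u Hu. unfold h. rewrite Rabs_mult, Rpower_minus_nat by lra.
  replace (M * C * (Rpower u al / u ^ k)) with (M * Rpower u al * (C / u ^ k))
    by (field; apply pow_nonzero; lra).
  apply Rmult_le_compat; [apply Rabs_pos|apply Rabs_pos|apply g_le; lra|apply HK, Hu].
Qed.

Lemma RInt_abs_mul_near_le : RInt h 0 de <= M * A / al * Rpower de al.
Proof.
  apply RInt_le_Rpower_singular; [exact h_cont|apply Rmult_le_pos; assumption|lra|exact de_pos|].
  intros u Hu. replace (al - 1) with (al - INR 1) by (simpl; ring).
  apply h_le_Rpower; [exact A_ge0| |lra].
  intros v Hv. rewrite pow_1. apply Kf_le_inv, Hv.
Qed.

Let h_le_far u : de < u < PI -> h u <= M * (B * de) * Rpower u (al - INR 2).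
Proof.
  intros Hu. apply h_le_Rpower; [apply Rmult_le_pos; lra| |lra].
  intros v Hv. replace (v ^ 2) with (v * v) by ring. apply Kf_le_inv_sq, Hv.
Qed.

Lemma RInt_abs_mul_far_le_lt1 : al < 1 -> RInt h de PI <= M * B / (1 - al) * Rpower de al.
Proof.
  intros Hal. pose proof PI_RGT_0.
  eapply Rle_trans.
  { apply (RInt_le_is_RInt h (fun u => M * (B * de) * Rpower u (al - 1 - 1)));
      [exact de_le_PI|solve_continuous| |].
    - intros u Hu. replace (al - 1 - 1) with (al - INR 2) by (simpl; ring). apply h_le_far, Hu.
    - apply (is_RInt_scal (fun u => Rpower u (al - 1 - 1))), is_RInt_Rpower; lra. }
  replace (Rpower de al) with (de * Rpower de (al - 1))
    by (replace (al - 1) with (al - INR 1) by (simpl; ring);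
        rewrite Rpower_minus_nat, pow_1 by exact de_pos; field; lra).
  pose proof (exp_pos ((al - 1) * ln PI)). fold (Rpower PI (al - 1)) in *.
  unfold scal; simpl; unfold mult; simpl.
  replace (M * (B * de) * ((Rpower PI (al - 1) - Rpower de (al - 1)) / (al - 1)))
    with (M * B / (1 - al) * (de * Rpower de (al - 1)) - M * B * de / (1 - al) * Rpower PI (al - 1))
    by (field; lra).
  assert (0 <= M * B * de / (1 - al) * Rpower PI (al - 1)).
  { apply Rmult_le_pos; [apply Rmult_le_pos|lra].
    - apply Rmult_le_pos; [apply Rmult_le_pos|]; lra.
    - left; apply Rinv_0_lt_compat; lra. }
  lra.
Qed.

Lemma RInt_abs_mul_far_le_eq1 : al = 1 -> RInt h de PI <= M * B * (de * ln (PI / de)).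
Proof.
  intros Hal. pose proof PI_RGT_0.
  rewrite ln_div by lra.
  apply (RInt_le_is_RInt h (fun u => M * (B * de) * / u)); [exact de_le_PI|solve_continuous| |].
  - intros u Hu. replace (/ u) with (Rpower u (al - INR 2))
      by (rewrite Rpower_minus_nat, Hal, Rpower_1 by lra; field; lra).
    apply h_le_far, Hu.
  - replace (M * B * (de * (ln PI - ln de))) with (scal (M * (B * de)) (ln PI - ln de))
      by (unfold scal; simpl; unfold mult; simpl; ring).
    apply (is_RInt_scal Rinv), is_RInt_inv; lra.
Qed.

Lemma RInt_abs_mul_le_lt1 : al < 1 ->
  RInt h 0 PI <= M * (A / al + B / (1 - al)) * Rpower de al.
Proof.
  intros Hal. rewrite <- (RInt_Chasles_R h 0 de PI) by exact h_cont.
  pose proof RInt_abs_mul_near_le. pose proof (RInt_abs_mul_far_le_lt1 Hal).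
  replace (M * (A / al + B / (1 - al)) * Rpower de al)
    with (M * A / al * Rpower de al + M * B / (1 - al) * Rpower de al) by (field; lra).
  lra.
Qed.

Lemma RInt_abs_mul_le_eq1 : al = 1 -> de <= 1 ->
  RInt h 0 PI <= M * (A + B) * (de * ln (PI / de)).
Proof.
  intros Hal Hde1. rewrite <- (RInt_Chasles_R h 0 de PI) by exact h_cont.
  pose proof RInt_abs_mul_near_le as Hnear. pose proof (RInt_abs_mul_far_le_eq1 Hal).
  rewrite Hal, Rpower_1, Rdiv_1 in Hnear by exact de_pos.
  assert (Hln : 1 <= ln (PI / de)).
  { rewrite <- ln_exp at 1. apply ln_le; [apply exp_pos|].
    pose proof exp_le_3. pose proof PI2_3_2.
    apply Rle_trans with PI; [lra|].
    unfold Rdiv. rewrite <- (Rmult_1_r PI) at 1. apply Rmult_le_compat_l; [lra|].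
    rewrite <- Rinv_1. apply Rinv_le_contravar; lra. }
  assert (M * A * de <= M * A * (de * ln (PI / de))).
  { rewrite <- (Rmult_1_r de) at 1. apply Rmult_le_compat_l; [apply Rmult_le_pos; lra|].
    apply Rmult_le_compat_l; lra. }
  lra.
Qed.

End KernelIntegral.

Section MeanError.

Variables (f : R -> R) (p w : nat -> R) (M Kc al : R).
Hypothesis f_cont : forall t, continuous f t.
Hypothesis f_periodic : forall t, f (t + 2 * PI) = f t.
Hypothesis al_range : 0 < al <= 1.
Hypothesis f_lip : forall delta, 0 < delta -> forall h x,
  Rabs h <= delta -> Rabs (f (x + h) - f x) <= M * Rpower delta al.
Hypothesis p_nonneg : forall k, 0 <= p k.
Hypothesis Psum_neq0 : forall n, Psum p n <> 0.
Hypothesis w_ge1 : forall k, 1 <= w k.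
Hypothesis w_nondecreasing : forall k, w k <= w (S k).
Hypothesis amat_variation_le : forall n,
  sum_lt (fun k => w k * Rabs (amat p n k / w k - amat p n (S k) / w (S k))) n
  <= Kc * amat p n n.

Let M_nonneg : 0 <= M.
Proof.
  pose proof (f_lip 1 Rlt_0_1 0 0 ltac:(rewrite Rabs_R0; lra)) as H.
  unfold Rpower in H. rewrite ln_1, Rmult_0_r, exp_0, Rmult_1_r in H.
  pose proof (Rabs_pos (f (0 + 0) - f 0)). lra.
Qed.

Let Kc_nonneg : 0 <= Kc.
Proof.
  pose proof (p_last_pos p w 0 Kc p_nonneg (Psum_neq0 0) w_ge1 (amat_variation_le 0)).
  pose proof (Psum_pos p 0 p_nonneg (Psum_neq0 0)).
  pose proof (amat_variation_nonneg p w 0 w_ge1).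
  pose proof (amat_variation_le 0). rewrite amat_diag in *.
  assert (0 < p 0 / Psum p 0) by (apply Rdiv_lt_0_compat; lra). nra.
Qed.

Let amat_diag_range n : 0 < amat p n n <= 1.
Proof.
  pose proof (p_last_pos p w n Kc p_nonneg (Psum_neq0 n) w_ge1 (amat_variation_le n)).
  pose proof (Psum_pos p n p_nonneg (Psum_neq0 n)).
  rewrite amat_diag. split; [apply Rdiv_lt_0_compat; lra|].
  apply Rmult_le_reg_r with (Psum p n); [lra|].
  unfold Rdiv. rewrite Rmult_assoc, Rinv_l, Rmult_1_l, Rmult_1_r by lra.
  unfold Psum. simpl. pose proof (sum_lt_nonneg p n p_nonneg). lra.
Qed.

Let Rabs_Rmean_sub_le_of_halves n x E :
  (forall g, (forall t, continuous g t) -> (forall u, 0 < u -> Rabs (g u) <= M * Rpower u al) ->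
     RInt (fun u => Rabs (g u * mean_kernel p n u)) 0 PI <= E) ->
  Rabs (Rmean p f n x - f x) <= 2 / PI * E.
Proof.
  intros HE. pose proof PI_RGT_0.
  eapply Rle_trans; [apply Rabs_Rmean_sub_le; auto|].
  assert (HE_minus : RInt (fun u => Rabs ((f (x + - u) - f x) * mean_kernel p n u)) 0 PI <= E).
  { apply HE; [solve_continuous|]. intros u Hu.
    apply f_lip; [exact Hu|]. rewrite Rabs_Ropp, Rabs_right; lra. }
  assert (HE_plus : RInt (fun u => Rabs ((f (x + u) - f x) * mean_kernel p n u)) 0 PI <= E).
  { apply HE; [solve_continuous|]. intros u Hu.
    apply f_lip; [exact Hu|]. rewrite Rabs_right; lra. }
  replace (2 / PI * E) with (/ PI * (E + E)) by (field; lra).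
  apply Rmult_le_compat_l; [left; apply Rinv_0_lt_compat|]; lra.
Qed.

Lemma Rmean_error_lt1 n x : al < 1 ->
  Rabs (Rmean p f n x - f x) <=
  2 / PI * M * (3 / al + 36 * (Kc + 1) / (1 - al)) * Rpower (p n / Psum p n) al.
Proof.
  intros Hal. pose proof (amat_diag_range n). pose proof M_nonneg. pose proof Kc_nonneg.
  pose proof PI2_3_2.
  rewrite <- amat_diag.
  replace (2 / PI * M * (3 / al + 36 * (Kc + 1) / (1 - al)) * Rpower (amat p n n) al)
    with (2 / PI * (M * (3 / al + 36 * (Kc + 1) / (1 - al)) * Rpower (amat p n n) al))
    by ring.
  apply Rabs_Rmean_sub_le_of_halves. intros g Hg Hgle.
  apply (RInt_abs_mul_le_lt1 g (mean_kernel p n) M 3 (36 * (Kc + 1)) al (amat p n n));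
    solve_continuous; try lra.
  - intros; apply Rabs_mean_kernel_le_inv; auto.
  - intros; apply (Rabs_mean_kernel_le_inv_sq p w); auto.
Qed.

Lemma Rmean_error_eq1 n x : al = 1 ->
  Rabs (Rmean p f n x - f x) <=
  2 / PI * M * (3 + 36 * (Kc + 1)) * (p n / Psum p n * ln (PI * Psum p n / p n)).
Proof.
  intros Hal. pose proof (amat_diag_range n). pose proof M_nonneg. pose proof Kc_nonneg.
  pose proof PI2_3_2.
  pose proof (p_last_pos p w n Kc p_nonneg (Psum_neq0 n) w_ge1 (amat_variation_le n)).
  replace (PI * Psum p n / p n) with (PI / (p n / Psum p n)) by (field; auto with real).
  rewrite <- amat_diag.
  replace (2 / PI * M * (3 + 36 * (Kc + 1)) * (amat p n n * ln (PI / amat p n n)))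
    with (2 / PI * (M * (3 + 36 * (Kc + 1)) * (amat p n n * ln (PI / amat p n n))))
    by ring.
  apply Rabs_Rmean_sub_le_of_halves. intros g Hg Hgle.
  apply (RInt_abs_mul_le_eq1 g (mean_kernel p n) M 3 (36 * (Kc + 1)) al (amat p n n));
    solve_continuous; try lra.
  - intros; apply Rabs_mean_kernel_le_inv; auto.
  - intros; apply (Rabs_mean_kernel_le_inv_sq p w); auto.
Qed.

End MeanError.

Lemma Rpower_INR_succ_ge1 beta k : 0 <= beta -> 1 <= Rpower (INR (k + 1)) beta.
Proof.
  intros Hb. replace 1 with (Rpower 1 beta) at 1
    by (unfold Rpower; rewrite ln_1, Rmult_0_r; apply exp_0).
  apply Rle_Rpower_l; [exact Hb|]. split; [lra|apply (le_INR 1); lia].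
Qed.

Lemma Rpower_INR_succ_le beta k : 0 <= beta ->
  Rpower (INR (k + 1)) beta <= Rpower (INR (S k + 1)) beta.
Proof.
  intros Hb. apply Rle_Rpower_l; [exact Hb|].
  split; [apply lt_0_INR|apply le_INR]; lia.
Qed.

Theorem corollary4p3
  (f : R -> R) (alpha beta : R) (p : nat -> R)
  (Hcont : forall x, continuity_pt f x)
  (Hper : forall x, f (x + 2 * PI) = f x)
  (Halpha : 0 < alpha <= 1)
  (* omega(delta) = O(delta^alpha): omega(delta) <= M delta^alpha for all delta > 0 *)
  (Hlip : exists M, forall delta, 0 < delta -> forall h x,
            Rabs h <= delta -> Rabs (f (x + h) - f x) <= M * Rpower delta alpha)
  (Hp : forall k, 0 <= p k)
  (HP : forall n, Psum p n <> 0)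
  (Hbeta : 0 <= beta)
  (Hcond : exists K, forall n m, (m <= n)%nat ->
      sum_lt (fun k => Rpower (INR (k + 1)) beta *
                 Rabs (amat p n k / Rpower (INR (k + 1)) beta
                       - amat p n (k + 1) / Rpower (INR (k + 2)) beta)) m
      <= K * amat p n m) :
  (alpha < 1 -> exists C, forall n x,
      Rabs (Rmean p f n x - f x) <= C * Rpower (p n / Psum p n) alpha)
  /\
  (alpha = 1 -> exists C, forall n x,
      Rabs (Rmean p f n x - f x) <= C * (p n / Psum p n * ln (PI * Psum p n / p n))).
Proof.
  assert (Hf : forall t, continuous f t) by (intros; apply continuity_pt_filterlim, Hcont).
  destruct Hlip as [M HM], Hcond as [Kc HK].
  set (w k := Rpower (INR (k + 1)) beta).
  assert (Hw1 : forall k, 1 <= w k) by (intros; apply Rpower_INR_succ_ge1, Hbeta).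
  assert (Hwle : forall k, w k <= w (S k)) by (intros; apply Rpower_INR_succ_le, Hbeta).
  (* only the case [m = n] of the hypothesis is needed *)
  assert (Hvar : forall n,
    sum_lt (fun k => w k * Rabs (amat p n k / w k - amat p n (S k) / w (S k))) n
    <= Kc * amat p n n).
  { intros n. eapply Rle_trans; [right|apply (HK n n (le_n n))].
    apply sum_lt_ext. intros k _. unfold w.
    now replace (S k + 1)%nat with (k + 2)%nat by lia; replace (S k) with (k + 1)%nat by lia. }
  split; intros Hal.
  - exists (2 / PI * M * (3 / alpha + 36 * (Kc + 1) / (1 - alpha))). intros n x.
    exact (Rmean_error_lt1 f p w M Kc alpha Hf Hper Halpha HM Hp HP Hw1 Hwle Hvar n x Hal).
  - exists (2 / PI * M * (3 + 36 * (Kc + 1))). intros n x.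
    exact (Rmean_error_eq1 f p w M Kc alpha Hf Hper Halpha HM Hp HP Hw1 Hwle Hvar n x Hal).
Qed.
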